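(* Let $p\ge0$, $q\ge1$, $\mathbf{k}=(k_1,\dots,k_r)$ with $k_i\ge1$, and let $\tilde V$ denote $\tilde V_{\mathbf{k}}(\mathbb{R}^{p,q})$ if $q\ge2$, or a fixed component $\tilde V_{\mathbf{k}}(\mathbb{R}^{p,1})_\Sigma$ if $q=1$. Let $\tilde V^\infty=\tilde V\cup\{\infty\}$ be its one-point compactification. For every $\lambda\in\mathbb{P}(\mathbf{k})$, the subspace $F_\lambda\subseteq\tilde V^\infty$ consisting of $\infty$ together with all $Z\in\tilde V$ with $\omega(Q^Z)\ge\lambda$ is closed in $\tilde V^\infty$.
   Context: $d=p+q$; points of $\mathbb{R}^d$ are written $(\zeta,t)\in\mathbb{R}^{d-1}\times\mathbb{R}$ with projections $\mathrm{pr}_\zeta,\mathrm{pr}_t$; $\mathrm{pr}_1$ is the projection to the first $p$ coordinates. $\tilde V_{\mathbf{k}}(\mathbb{R}^{p,q})\subseteq\prod_i(\mathbb{R}^d)^{k_i}$ consists of tuples $Z=(z_i^j)$ of pairwise distinct points with $\mathrm{pr}_1(z_i^1)=\dots=\mathrm{pr}_1(z_i^{k_i})$ for each $i$; for $q=1$ and $\Sigma=(\sigma_i)\in\prod\mathfrak{S}_{k_i}$, $\tilde V_{\mathbf{k}}(\mathbb{R}^{p,1})_\Sigma$ is the subset where $\mathrm{pr}_t(z_i^{\sigma_i(j)})<\mathrm{pr}_t(z_i^{\sigma_i(j+1)})$ for all $i,j$. Table $T_{\mathbf{k}}=\{(i,j):1\le i\le r,1\le j\le k_i\}$ with lexicographic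 order $<$. A ray partition $Q$ of type $\mathbf{k}$: partition of $T_{\mathbf{k}}$ into nonempty $Q_1,\dots,Q_l$ with total orders $\prec_\beta$, such that $\min(Q_1,<)<\dots<\min(Q_l,<)$ and $\min(Q_\beta,\prec_\beta)=\min(Q_\beta,<)$. It is witnessed by $Z$ if all $z_i^j$, $(i,j)\in Q_\beta$, have the same $\mathrm{pr}_\zeta$, and $(i,j)\prec_\beta(i',j')$ implies $\mathrm{pr}_t(z_i^j)<\mathrm{pr}_t(z_{i'}^{j'})$. Weight $\omega(Q)=(|Q_1|,\dots,|Q_l|)\in\mathbb{P}(\mathbf{k})$, the set of sequences of positive integers summing to $|\mathbf{k}|=\sum k_i$, ordered lexicographically after padding with zeros. For each $Z\in\tilde V$, $Q^Z$ denotes the unique ray partition witnessed by $Z$ of maximal weight among those witnessed by $Z$ (its existence and uniqueness is known). *)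

From HB Require Import structures.
From mathcomp Require Import all_boot all_order all_algebra all_fingroup.
From mathcomp Require Import all_classical all_reals all_analysis.
Unset Printing Implicit Defensive.
Import Order.TTheory GRing.Theory Num.Theory.
Import numFieldNormedType.Exports.
Local Open Scope classical_set_scope.
Local Open Scope ring_scope.

(* Points of R^d, d = p + q (q >= 1), written (zeta, t) in R^(d-1) x R.   *)
Notation Rpt R p q := ('rV[R]_(p + q.-1) * R)%type.

Definition pr_zeta {R : realType} {p q : nat} (z : Rpt R p q) : 'rV[R]_(p + q.-1) := z.1.
Definition pr_t {R : realType} {p q : nat} (z : Rpt R p q) : R := z.2.
Definition pr_1 {R : realType} {p q : nat} (z : Rpt R p q) : 'rV[R]_p :=
  lsubmx (pr_zeta z).

(* The table T_k = {(i,j) : i < r, j < k_i} (0-based), k = [:: k_1; ...; k_r]. *)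
Definition table (k : seq nat) : finType := {i : 'I_(size k) & 'I_(nth 0%N k i)}.

Definition tab {k : seq nat} {i : 'I_(size k)} (j : 'I_(nth 0%N k i)) : table k :=
  Tagged (fun i0 : 'I_(size k) => 'I_(nth 0%N k i0)) j.

Definition table_lt {k : seq nat} (x y : table k) : bool :=
  (tag x < tag y)%N ||
  ((tag x == tag y :> nat) && ((tagged x : nat) < (tagged y : nat))%N).
Definition table_le {k : seq nat} (x y : table k) : bool :=
  (x == y) || table_lt x y.

Notation config R p q k := {ptws table k -> Rpt R p q}.

Definition Vtilde (R : realType) (p q : nat) (k : seq nat) : set (config R p q k) :=
  [set Z | injective Z /\
     forall (i : 'I_(size k)) (j j' : 'I_(nth 0%N k i)),
       pr_1 (Z (tab j)) = pr_1 (Z (tab j'))].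

Definition Vtilde_Sigma (R : realType) (p : nat) (k : seq nat)
    (Sigma : forall i : 'I_(size k), {perm 'I_(nth 0%N k i)}) : set (config R p 1 k) :=
  [set Z | Vtilde R p 1 k Z /\
     forall (i : 'I_(size k)) (j j' : 'I_(nth 0%N k i)), (j.+1 = j')%N ->
       pr_t (Z (tab (Sigma i j))) < pr_t (Z (tab (Sigma i j')))].

(* Ray partitions of type k.  A ray partition Q_1, ..., Q_l with total     *)
(* orders prec_beta is encoded as a list of blocks, each block being the   *)
(* list of its elements in increasing prec_beta-order.                     *)
Definition ray_partition {k : seq nat} (Q : seq (seq (table k))) : Prop :=
  [/\ perm_eq (flatten Q) (enum (table k)),
      all (fun b => b != [::]) Q,
      (* min(Q_beta, prec_beta) = min(Q_beta, <) *)
      (forall b, b \in Q -> forall x0 x, x \in b -> table_le (head x0 b) x)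
    &
      (forall x0 (a c : nat), (a < c < size Q)%N ->
          table_lt (head x0 (nth [::] Q a)) (head x0 (nth [::] Q c)))].

Definition witnessed {R : realType} {p q : nat} {k : seq nat}
    (Z : config R p q k) (Q : seq (seq (table k))) : Prop :=
  forall b, b \in Q ->
    (forall x y, x \in b -> y \in b -> pr_zeta (Z x) = pr_zeta (Z y)) /\
    pairwise (fun x y => pr_t (Z x) < pr_t (Z y)) b.

Definition weight {k : seq nat} (Q : seq (seq (table k))) : seq nat := map size Q.

Definition Pk (k : seq nat) (lam : seq nat) : Prop :=
  all (fun n => 0 < n)%N lam /\ sumn lam = sumn k.

Fixpoint lex_le_eqsize (s t : seq nat) : bool :=
  match s, t with
  | [::], _ => true
  | _ :: _, [::] => false
  | x :: s', y :: t' => (x < y)%N || ((x == y) && lex_le_eqsize s' t')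
  end.
Definition pad0 (n : nat) (s : seq nat) : seq nat := s ++ nseq (n - size s) 0%N.
Definition lex_le (s t : seq nat) : bool :=
  let n := maxn (size s) (size t) in lex_le_eqsize (pad0 n s) (pad0 n t).

Definition is_QZ {R : realType} {p q : nat} {k : seq nat}
    (Z : config R p q k) (Q : seq (seq (table k))) : Prop :=
  [/\ ray_partition Q, witnessed Z Q &
      forall Q', ray_partition Q' -> witnessed Z Q' -> lex_le (weight Q') (weight Q)].

(* F_lambda inside the one-point compactification of V (a subset of the   *)
(* configurations, with the subspace topology); None is the point at oo.   *)
Definition F_lambda {R : realType} {p q : nat} {k : seq nat}
    (V : set (config R p q k)) (lam : seq nat) :
    set (one_point_compactification (set_type V)) :=
  fun x => match x with
           | None => True
           | Some Z => exists Q, is_QZ (set_val Z) Q /\ lex_le lam (weight Q)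
           end.

(* The weight of Q^Z is upper semicontinuous in Z.  Near an injective
   configuration Z every strict relation among its points persists: distinct
   zeta-coordinates stay distinct and strict t-inequalities stay strict.  So a
   ray partition witnessed by a nearby Z' is already witnessed by Z (a tied
   t-order at Z would contradict injectivity, a reversed one persistence),
   whence omega(Q^Z') <= omega(Q^Z) and the complement of F_lambda in V is
   open.  Adding the point at infinity to a set closed in V keeps it closed in
   the compactification.  Q^Z exists because the weights of ray partitions
   range over a finite set, totally preordered by the padded lexicographic
   order. *)

From HB Require Import structures.
From mathcomp Require Import all_boot all_order all_algebra all_fingroup.
From mathcomp Require Import all_classical all_reals all_analysis.
From mathcomp Require Import zify.
Import Order.TTheory Num.Theory.
Import numFieldNormedType.Exports.
Local Open Scope classical_set_scope.
Local Open Scope ring_scope.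

Lemma lex_le_eqsizeE (s t : seq nat) :
  lex_le_eqsize s t = (s <= t :> seqlexi nat)%O.
Proof.
elim: s t => [|x s IH] [|y t] //=; rewrite lexi_cons IH !leEnat.
by case: ltngtP => //= ->; rewrite eqxx.
Qed.

Lemma lexi_cat2r d (T : preorderType d) (s t u : seq T) : size s = size t ->
  (s ++ u <= t ++ u :> seqlexi T)%O = (s <= t :> seqlexi T)%O.
Proof.
elim: s t => [|x s IH] [|y t] //= => [_ | [/IH eq_st]]; first exact: lexx.
by rewrite !lexi_cons eq_st.
Qed.

Lemma lex_le_padE (s t : seq nat) n : (maxn (size s) (size t) <= n)%N ->
  lex_le s t = (pad0 n s <= pad0 n t :> seqlexi nat)%O.
Proof.
rewrite /lex_le lex_le_eqsizeE; set m := maxn _ _ => le_mn.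
have pad0_widen u : (size u <= m)%N -> pad0 n u = pad0 m u ++ nseq (n - m) 0%N.
  by move=> le_um; rewrite /pad0 -catA -nseqD; congr (_ ++ nseq _ _); lia.
rewrite !pad0_widen ?leq_maxl ?leq_maxr // lexi_cat2r // !size_cat !size_nseq.
by rewrite !subnKC ?leq_maxl ?leq_maxr.
Qed.

Lemma lex_le_trans : transitive lex_le.
Proof.
move=> t s u; set n := maxn (size s) (maxn (size t) (size u)).
rewrite !(@lex_le_padE _ _ n) /n; [exact: le_trans | lia..].
Qed.

Lemma lex_le_total : total lex_le.
Proof. by move=> s t; rewrite /lex_le maxnC !lex_le_eqsizeE le_total. Qed.

Lemma exists_max_seq {T : eqType} {le : rel T} {s : seq T} {x0 : T} :
  total le -> transitive le -> x0 \in s ->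
  exists2 x, x \in s & {in s, forall y, le y x}.
Proof.
move=> le_total le_trans s_x0.
have ge_total : total (fun x y => le y x) by move=> x y; exact: le_total.
have ge_trans : transitive (fun x y => le y x).
  by move=> y x z /= le_yx le_zy; exact: le_trans le_zy le_yx.
(* The head of s sorted decreasingly is a maximum. *)
have := mem_sort (fun x y => le y x) s.
case: (sort _ s) (sort_sorted ge_total s) => [|x r] sorted_r sort_s.
  by move: s_x0; rewrite -sort_s.
exists x => [|y]; first by rewrite -sort_s mem_head.
rewrite -sort_s inE => /predU1P[->|r_y]; first by case/orP: (le_total x x).
exact: (allP (order_path_min ge_trans sorted_r)).
Qed.

Lemma size_le_sumn (s : seq nat) : all (leq 1) s -> (size s <= sumn s)%N.
Proof. by elim: s => //= a s IH /andP[a_gt0 /IH]; lia. Qed.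

Lemma leq_sumn_mem (s : seq nat) a : a \in s -> (a <= sumn s)%N.
Proof. by elim: s => //= b s IH; rewrite inE => /predU1P[->|/IH]; lia. Qed.

Definition bounded_seqs (n : nat) : seq (seq nat) :=
  [seq map val (s : seq 'I_n.+1) | s : n.-bseq 'I_n.+1].

Lemma mem_bounded_seqs n (s : seq nat) :
  (size s <= n)%N -> all (leq^~ n) s -> s \in bounded_seqs n.
Proof.
move=> size_s s_le.
have size_inord : (size (map inord s : seq 'I_n.+1) <= n)%N by rewrite size_map.
apply/mapP; exists (Bseq size_inord); first by rewrite mem_enum.
rewrite /= -map_comp map_id_in //.
by move=> a /(allP s_le) a_le /=; rewrite inordK.
Qed.

Lemma near_neq {T U : topologicalType} {f g : T -> U} {x : T} :
  hausdorff_space U -> {for x, continuous f} -> {for x, continuous g} ->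
  f x <> g x -> \forall y \near x, f y <> g y.
Proof.
rewrite open_hausdorff => U_T2 fx gx /eqP /U_T2[[A B] /=].
rewrite !inE => -[A_fx B_gx] [oA oB AB0].
near=> y => fg.
have A_fy : A (f y) by near: y; apply: fx; exact: open_nbhs_nbhs.
have B_gy : B (g y) by near: y; apply: gx; exact: open_nbhs_nbhs.
by rewrite -[False]/(set0 (g y)) -AB0; split=> //; rewrite -fg.
Unshelve. all: by end_near.
Qed.

Lemma near_lt {T : topologicalType} {R : realFieldType} {f g : T -> R} {x : T} :
  {for x, continuous f} -> {for x, continuous g} ->
  f x < g x -> \forall y \near x, f y < g y.
Proof.
move=> fx gx fg; have [fm mg] := midf_lt fg.
near=> y; apply: (lt_trans (y := (f x + g x) / 2)); near: y.
- exact: cvgr_lt fx _ fm.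
- exact: cvgr_gt gx _ mg.
Unshelve. all: by end_near.
Qed.

Lemma closed_one_point (X : topologicalType)
    (F : set (one_point_compactification X)) :
  F None -> closed (Some @^-1` F) -> closed F.
Proof.
move=> F_oo cF; rewrite -[F]setCK; apply: open_closedC.
have -> : ~` F = Some @` ~` (Some @^-1` F).
  apply/seteqP; split=> [[x|] // nFx | _ [x nFx <-] //]; by exists x.
exact/one_point_compactification_open_some/closed_openC.
Qed.

Section Configurations.
Context {R : realType} {p q : nat} {k : seq nat}.
Implicit Types (Z Zc : config R p q k) (Q : seq (seq (table k))).

Lemma weight_bounded Q :
  ray_partition Q -> weight Q \in bounded_seqs #|table k|.
Proof.
case=> perm_Q nonempty_Q _ _.
have sum_w : sumn (weight Q) = #|table k|.
  by rewrite -size_flatten (perm_size perm_Q) cardE.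
have pos_w : all (leq 1) (weight Q).
  by rewrite all_map; apply: sub_all nonempty_Q => b /=; rewrite lt0n size_eq0.
apply: mem_bounded_seqs; rewrite -sum_w; first exact: size_le_sumn.
by apply/allP => a; exact: leq_sumn_mem.
Qed.

Lemma exists_QZ_ge Z Q : ray_partition Q -> witnessed Z Q ->
  exists2 Q0, is_QZ Z Q0 & lex_le (weight Q) (weight Q0).
Proof.
move=> rQ wQ.
pose attained w := exists Q',
  [/\ ray_partition Q', witnessed Z Q' & weight Q' = w].
pose weights := [seq w <- bounded_seqs #|table k| | `[< attained w >]].
have mem_weights Q' : ray_partition Q' -> witnessed Z Q' -> weight Q' \in weights.
  move=> rQ' wQ'; rewrite mem_filter weight_bounded // andbT.
  by apply/asboolP; exists Q'.
have [w] := exists_max_seq lex_le_total lex_le_trans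
  (mem_weights Q rQ wQ).
rewrite mem_filter => /andP[/asboolP[Q0 [rQ0 wQ0 <-]] _] w_max.
exists Q0; last exact: w_max (mem_weights Q rQ wQ).
by split=> // Q' rQ' wQ'; exact/w_max/mem_weights.
Qed.

Definition keeps_strict_relations Z Z' x y :=
  (pr_zeta (Z x) <> pr_zeta (Z y) -> pr_zeta (Z' x) <> pr_zeta (Z' y)) /\
  (pr_t (Z x) < pr_t (Z y) -> pr_t (Z' x) < pr_t (Z' y)).

Lemma near_keeps_strict_relations Zc x y :
  \forall Z \near Zc, keeps_strict_relations Zc Z x y.
Proof.
have zeta_cont i :
    {for Zc, continuous (fun Z : config R p q k => pr_zeta (Z i))}.
  apply: (@continuous_comp _ _ _ (fun Z => Z i) pr_zeta).
    exact: proj_continuous.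
  exact: cvg_fst.
have t_cont i : {for Zc, continuous (fun Z : config R p q k => pr_t (Z i))}.
  apply: (@continuous_comp _ _ _ (fun Z => Z i) pr_t).
    exact: proj_continuous.
  exact: cvg_snd.
near=> Z; split; near: Z.
- have [ne|/contrapT eq_xy] := pselect (pr_zeta (Zc x) <> pr_zeta (Zc y)).
    have := near_neq (@norm_hausdorff _ _) (zeta_cont x) (zeta_cont y) ne.
    by apply: filterS => Z ne_Z _.
  by apply: nearW => Z /(_ eq_xy).
- have [lt|nlt] := pselect (pr_t (Zc x) < pr_t (Zc y)).
    by apply: filterS (near_lt (t_cont x) (t_cont y) lt) => Z lt_Z _.
  by apply: nearW => Z /nlt.
Unshelve. all: by end_near.
Qed.

Lemma near_keeps_all_strict_relations Zc :
  \forall Z \near Zc, forall x y, keeps_strict_relations Zc Z x y.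
Proof.
apply: (filter_forall (nbhs_filter Zc)) => x.
exact: (filter_forall (nbhs_filter Zc)) (near_keeps_strict_relations Zc x).
Qed.

Lemma witnessed_of_keeps_strict_relations Z Z' Q : injective Z ->
  (forall x y, keeps_strict_relations Z Z' x y) ->
  witnessed Z' Q -> witnessed Z Q.
Proof.
move=> injZ ZZ' wQ b bQ; have [same_zeta' sorted'] := wQ b bQ.
have same_zeta x y : x \in b -> y \in b -> pr_zeta (Z x) = pr_zeta (Z y).
  move=> xb yb; apply: contrapT => ne.
  exact: (ZZ' x y).1 ne (same_zeta' x y xb yb).
split=> //; apply: (sub_in_pairwise (P := mem b)) sorted'; last exact/allP.
move=> x y xb yb lt'; case: (ltgtP (pr_t (Z x)) (pr_t (Z y))) => // [gt|eq_t].
  by have := lt_trans lt' ((ZZ' y x).2 gt); rewrite ltxx.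
have eq_xy : x = y.
  apply: injZ; rewrite [Z x]surjective_pairing [Z y]surjective_pairing.
  by congr pair; [exact: same_zeta | exact: eq_t].
by move: lt'; rewrite eq_xy ltxx.
Qed.

Lemma near_weight_QZ_le Zc : injective Zc ->
  \forall Z \near Zc, forall Q, is_QZ Z Q ->
    exists2 Q0, is_QZ Zc Q0 & lex_le (weight Q) (weight Q0).
Proof.
move=> injZc; apply: filterS (near_keeps_all_strict_relations Zc).
move=> Z ZcZ Q [rQ wQ _].
by apply: exists_QZ_ge rQ _; exact: witnessed_of_keeps_strict_relations ZcZ wQ.
Qed.


Lemma closed_F_lambda (V : set (config R p q k)) (lam : seq nat) :
  (forall Z, V Z -> injective Z) -> closed (F_lambda V lam).
Proof.
move=> V_inj; apply: closed_one_point => //.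
rewrite -[Some @^-1` _]setCK; apply: open_closedC; rewrite openE => Z not_F.
have near_Z := near_weight_QZ_le _ (V_inj _ (set_valP Z)).
near=> Z'.
have QZ_le Q : is_QZ (set_val Z') Q ->
    exists2 Q0, is_QZ (set_val Z) Q0 & lex_le (weight Q) (weight Q0).
  by move: Q; near: Z'; exact: initial_continuous near_Z.
move=> -[Q [/QZ_le[Q0 QZ0 le0] lam_le]].
by apply: not_F; exists Q0; split => //; exact: lex_le_trans lam_le le0.
Unshelve. all: by end_near.
Qed.

End Configurations.

Theorem lemma3p12 (R : realType) (p q : nat) (k : seq nat) :
  (0 < q)%N -> (0 < size k)%N -> all (fun n => 0 < n)%N k ->
  forall lam : seq nat, Pk k lam ->
  ((1 < q)%N -> closed (F_lambda (Vtilde R p q k) lam)) /\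
  (q = 1%N -> forall Sigma : (forall i : 'I_(size k), {perm 'I_(nth 0%N k i)}),
     closed (F_lambda (Vtilde_Sigma R p k Sigma) lam)).
Proof.
move=> _ _ _ lam _; split=> [_ | _ Sigma]; apply: closed_F_lambda.
- by move=> Z [].
- by move=> Z [[]].
Qed.
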